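(* For every integer $n\geq 1$, the map $\Phi$ restricts to a bijection from $\mathcal{M}^\star_n$ onto $\mathcal{GD}^\star_n$, and to a bijection from $\mathcal{M}^{s,\star}_n$ onto $\mathcal{D}^\star_n$.
   Context: For $n\geq 1$, $\mathcal{M}_n$ is the set of $n$-multisets of $[n]=\{1,\dots,n\}$, each identified with the non-decreasing sequence $\pi=\pi_1\cdots\pi_n$ of its elements. $\pi$ is superdiagonal if $i\leq\pi_i$ for all $i$. $\mathcal{M}^\star_n$ is the set of $\pi\in\mathcal{M}_n$ with no consecutive integers, i.e. $\pi_{i+1}\neq\pi_i+1$ for all $i\in[n-1]$, and $\mathcal{M}^{s,\star}_n$ is the set of superdiagonal elements of $\mathcal{M}^\star_n$. Paths are words in $U$ (up step) and $D$ (down step); $\mathcal{GD}_n$ is the set of words with $n$ letters $U$ and $n$ letters $D$ starting with $U$, and $\mathcal{D}_n\subseteq\mathcal{GD}_n$ those in which every prefix has at least as many $U$'s as $D$'s (Dyck paths). For a set $\mathcal{P}$ of paths, $\mathcal{P}^\star$ is the subset of paths not containing $DUD$ as a factor (three consecutive letters). The map $\Phi:\mathcal{M}_n\to\mathcal{GD}_n$ is $\Phi(\pi)=U^{\pi_1}DU^{\pi_2-\pi_1}D\cdots U^{\pi_n-\pi_{n-1}}DU^{n-\pi_n}$. *)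

From mathcomp Require Import all_boot.
Set Implicit Arguments. Unset Strict Implicit. Unset Printing Implicit Defensive.

(* An n-multiset of [n] = {1..n}, identified with the non-decreasing sequence
   pi_1 ... pi_n of its elements (stored 0-indexed: nth 0 pi i = pi_{i+1}). *)
Definition in_M (n : nat) (pi : seq nat) : bool :=
  [&& size pi == n, sorted leq pi & all (fun x => (1 <= x) && (x <= n)) pi].

Definition superdiagonal (pi : seq nat) : bool :=
  [forall i : 'I_(size pi), i.+1 <= nth 0 pi i].

Definition no_consec (pi : seq nat) : bool :=
  [forall i : 'I_(size pi), (i.+1 < size pi) ==> (nth 0 pi i.+1 != (nth 0 pi i).+1)].

Definition in_Mstar (n : nat) (pi : seq nat) : bool := in_M n pi && no_consec pi.
Definition in_Msstar (n : nat) (pi : seq nat) : bool :=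
  [&& in_M n pi, superdiagonal pi & no_consec pi].

Notation U := true.
Notation D := false.

Definition in_GD (n : nat) (p : seq bool) : bool :=
  [&& count (pred1 U) p == n, count (pred1 D) p == n & head D p == U].

Definition in_Dyck (n : nat) (p : seq bool) : bool :=
  in_GD n p &&
  [forall k : 'I_(size p).+1, count (pred1 D) (take k p) <= count (pred1 U) (take k p)].

Definition DUD_free (p : seq bool) : bool := ~~ infix [:: D; U; D] p.

Definition in_GDstar (n : nat) (p : seq bool) : bool := in_GD n p && DUD_free p.
Definition in_Dstar (n : nat) (p : seq bool) : bool := in_Dyck n p && DUD_free p.

(* Phi(pi) = U^{pi_1} D U^{pi_2-pi_1} D ... U^{pi_n-pi_{n-1}} D U^{n-pi_n} *)
Fixpoint phi_aux (n prev : nat) (s : seq nat) : seq bool :=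
  match s with
  | [::] => nseq (n - prev) U
  | x :: s' => nseq (x - prev) U ++ D :: phi_aux n x s'
  end.

Definition Phi (n : nat) (pi : seq nat) : seq bool := phi_aux n 0 pi.

Definition bij_between (A : seq nat -> bool) (B : seq bool -> bool)
  (f : seq nat -> seq bool) : Prop :=
  [/\ (forall x, A x -> B (f x)),
      (forall x y, A x -> A y -> f x = f y -> x = y)
    & (forall z, B z -> exists2 x, A x & f x = z)].

From mathcomp Require Import all_boot zify.

Set Implicit Arguments.
Unset Strict Implicit.

(* Phi places the i-th D after exactly pi_i letters U, so pi is recovered by
   recording, for each D, the number of U's read so far; this is the inverse
   on GD_n.  The i-th D is followed by pi_{i+1} - pi_i letters U before the
   next D, so a factor DUD occurs exactly when pi_{i+1} = pi_i + 1.  The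
   local minima of the path sit right after its D's, and right after the i-th
   D the height is pi_i - i, so it is a Dyck path exactly when pi_i >= i. *)

Lemma bij_between_restrict (A P : pred (seq nat)) (B Q : pred (seq bool))
    (A' : seq nat -> bool) (B' : seq bool -> bool) f :
  bij_between A B f -> (forall x, A x -> Q (f x) = P x) ->
  A' =1 predI A P -> B' =1 predI B Q -> bij_between A' B' f.
Proof.
move=> [fAB f_inj f_onto] fQP eqA' eqB'; split=> [x|x y|z].
- by rewrite eqA' eqB' => /andP[Ax Px] /=; rewrite fAB // fQP.
- by rewrite !eqA' => /andP[Ax _] /andP[Ay _]; exact: f_inj.
- rewrite eqB' => /andP[Bz Qz]; have [x Ax fx_z] := f_onto z Bz.
  by exists x => //; rewrite eqA' /= Ax -fQP // fx_z.
Qed.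

Lemma path_leq0 s : path leq 0 s = sorted leq s.
Proof. by case: s. Qed.

Local Notation DUD := [:: D; U; D].

Definition nonconsec : rel nat := fun a b => b != a.+1.

Lemma no_consec_cons x s : no_consec (x :: s) = path nonconsec x s.
Proof.
apply/forallP/(pathP 0) => [no_succ i lt_i_s | no_succ [i lt_i_s]].
  by have := no_succ (Ordinal (leqW lt_i_s)); rewrite /= ltnS lt_i_s.
by apply/implyP => /no_succ.
Qed.

Lemma infix_DUD_nseqU k q : infix DUD (nseq k U ++ q) = infix DUD q.
Proof. by elim: k. Qed.

Lemma infix_DUD_phi_aux n prev s :
  infix DUD (D :: phi_aux n prev s) = ~~ path nonconsec prev s.
Proof.
elim: s prev => [|x s IH] prev.
  rewrite /=; case: (n - prev) => [|[|m]] //=.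
  by rewrite -[nseq _ _]cats0 infix_DUD_nseqU.
have succ_x : (x - prev == 1) = (x == prev.+1) by lia.
rewrite [phi_aux _ _ _]/= [path _ _ _]/=.
rewrite -[nonconsec prev x]/(x != prev.+1) -succ_x.
case: (x - prev) => [|[|m]].
- by rewrite infix_consl /= -/(infix DUD (D :: phi_aux n x s)) IH.
- by rewrite /= prefix0s.
- by rewrite infix_consl infix_DUD_nseqU IH.
Qed.

Lemma DUD_free_Phi n pi : DUD_free (Phi n pi) = no_consec pi.
Proof.
rewrite /DUD_free /Phi; case: pi => [|x s] /=.
  by rewrite -[nseq _ _]cats0 infix_DUD_nseqU; apply/esym/forallP => -[].
by rewrite infix_DUD_nseqU infix_DUD_phi_aux negbK no_consec_cons.
Qed.

Lemma count_U_phi_aux n prev s : prev <= n -> path leq prev s ->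
  all (leq^~ n) s -> count (pred1 U) (phi_aux n prev s) = n - prev.
Proof.
elim: s prev => [|x s IH] prev /= le_prev_n.
  by rewrite count_nseq mul1n.
case/andP=> le_prev_x path_s /andP[le_x_n all_s].
rewrite count_cat count_nseq /= mul1n add0n IH //; lia.
Qed.

Lemma count_D_phi_aux n prev s : count (pred1 D) (phi_aux n prev s) = size s.
Proof.
elim: s prev => [|x s IH] prev /=; first by rewrite count_nseq mul0n.
by rewrite count_cat count_nseq /= mul0n IH.
Qed.

Lemma nseqU_D_inj a b r r' : nseq a U ++ D :: r = nseq b U ++ D :: r' ->
  a = b /\ r = r'.
Proof. by elim: a b => [|a IH] [|b] //= [] // /IH [-> ->]. Qed.

Lemma phi_aux_inj n prev s t : path leq prev s -> path leq prev t ->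
  phi_aux n prev s = phi_aux n prev t -> s = t.
Proof.
elim: s t prev => [|x s IH] [|y t] prev //;
  try by move=> _ _ /(congr1 (count (pred1 D))); rewrite !count_D_phi_aux.
rewrite /= => /andP[le_prev_x path_s] /andP[le_prev_y path_t].
case/nseqU_D_inj=> eq_xy eq_r; have eq_yx : y = x by lia.
by subst y; rewrite (IH t x path_s path_t eq_r).
Qed.

Fixpoint decode (c : nat) (p : seq bool) : seq nat :=
  if p is b :: p' then
    if b then decode c.+1 p' else c :: decode c p'
  else [::].

Lemma path_decode c p : path leq c (decode c p).
Proof.
elim: p c => [|[] p IH] c //=; last by rewrite leqnn IH.
exact: (path_le leq_trans (leqnSn c) (IH c.+1)).
Qed.

Lemma decode_ub c p : all (leq^~ (c + count (pred1 U) p)) (decode c p).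
Proof.
elim: p c => [|[] p IH] c //=; first by rewrite add1n -addSnnS IH.
by rewrite add0n leq_addr IH.
Qed.

Lemma size_decode c p : size (decode c p) = count (pred1 D) p.
Proof. by elim: p c => [|[] p IH] c //=; rewrite IH. Qed.

Lemma phi_aux_consU n c s : c < n -> all (leq c.+1) s ->
  phi_aux n c s = U :: phi_aux n c.+1 s.
Proof.
case: s => [|x s] /= lt_c_n; first by rewrite -(subnSK lt_c_n).
by case/andP=> lt_c_x _; rewrite -(subnSK lt_c_x).
Qed.

Lemma phi_aux_decode n c p : c + count (pred1 U) p = n ->
  phi_aux n c (decode c p) = p.
Proof.
elim: p c => [|[] p IH] c /=; first by rewrite addn0 => <-; rewrite subnn.
  move=> count_p; rewrite phi_aux_consU; last 2 first.
  - lia.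
  - exact: order_path_min leq_trans (path_decode c.+1 p).
  by rewrite IH // -count_p addSnnS.
by move=> count_p; rewrite subnn IH.
Qed.

Lemma Phi_in_GD n pi : 0 < n -> in_M n pi -> in_GD n (Phi n pi).
Proof.
move=> n_gt0 /and3P[/eqP size_pi sorted_pi /allP pi_range].
have pi_le_n : all (leq^~ n) pi by apply/allP => x /pi_range /andP[].
rewrite /in_GD /Phi count_U_phi_aux ?path_leq0 // count_D_phi_aux size_pi !eqxx.
case: pi size_pi pi_range {sorted_pi pi_le_n} => [|x s] /=.
  by move=> n0; rewrite -n0 in n_gt0.
by rewrite subn0 eqxx => _ /(_ x (mem_head x s)); case: x.
Qed.

Lemma decode_in_M n p : in_GD n p -> in_M n (decode 0 p).
Proof.
case/and3P=> /eqP count_U /eqP count_D.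
rewrite /in_M size_decode count_D eqxx -path_leq0 path_decode.
case: p count_U {count_D} => [|[] p] //= count_U _.
apply/allP => x x_in.
rewrite (allP (order_path_min leq_trans (path_decode 1 p))) //=.
by rewrite -count_U (allP (decode_ub 1 p)).
Qed.

Lemma Phi_decode n p : in_GD n p -> Phi n (decode 0 p) = p.
Proof. by case/and3P=> /eqP count_U _ _; rewrite /Phi phi_aux_decode. Qed.

Lemma bij_Phi_M_GD n : 0 < n -> bij_between (in_M n) (in_GD n) (Phi n).
Proof.
move=> n_gt0; split=> [pi|pi pi'|p].
- exact: Phi_in_GD.
- move=> /and3P[_ sorted_pi _] /and3P[_ sorted_pi' _].
  by apply: phi_aux_inj; rewrite path_leq0.
- by move=> GD_p; exists (decode 0 p); [exact: decode_in_M | exact: Phi_decode].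
Qed.

Fixpoint stays_nonneg (h : nat) (p : seq bool) : bool :=
  if p is b :: p' then
    if b then stays_nonneg h.+1 p' else (0 < h) && stays_nonneg h.-1 p'
  else true.

Lemma stays_nonnegP h p :
  reflect (forall k,
             count (pred1 D) (take k p) <= h + count (pred1 U) (take k p))
          (stays_nonneg h p).
Proof.
elim: p h => [|[] p IH] h /=; first by apply: ReflectT => k.
  apply: (iffP (IH h.+1)) => ballot k.
    by case: k => [|k] //=; rewrite add0n addnA addn1.
  by have := ballot k.+1; rewrite /= add0n addnA addn1.
apply: (iffP andP) => [[h_gt0 /IH ballot] [|k] | ballot] //=.
  by rewrite add0n add1n -(prednK h_gt0) addSn ltnS.
have h_gt0 : 0 < h by have := ballot 1; rewrite /= take0 /= !addn0.
split=> //; apply/IH => k.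
by have := ballot k.+1; rewrite /= add0n add1n -(prednK h_gt0) addSn ltnS.
Qed.

Lemma in_Dyck_stays_nonneg n p : in_Dyck n p = in_GD n p && stays_nonneg 0 p.
Proof.
congr (_ && _); apply/forallP/stays_nonnegP => [ballot k | ballot k] //.
have [le_k_p | /ltnW le_p_k] := leqP k (size p).
  exact: ballot (Ordinal (le_k_p : k < (size p).+1)).
by rewrite take_oversize //; have := ballot ord_max; rewrite /= take_size.
Qed.

Fixpoint superdiagonal_from (k : nat) (s : seq nat) : bool :=
  if s is x :: s' then (k < x) && superdiagonal_from k.+1 s' else true.

Lemma superdiagonal_fromE k s :
  superdiagonal_from k s = [forall i : 'I_(size s), k + i < nth 0 s i].
Proof.
elim: s k => [|x s IH] k /=; first by apply/esym/forallP => -[].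
rewrite IH; apply/andP/forallP => [[lt_k_x /forallP above_s] | above].
  case=> -[|i] lt_i_s; first by rewrite addn0.
  by have := above_s (Ordinal (lt_i_s : i < size s)); rewrite /= addSnnS.
split; first by have := above ord0; rewrite addn0.
apply/forallP => -[i lt_i_s].
by have := above (Ordinal (lt_i_s : i.+1 < (size s).+1)); rewrite /= addSnnS.
Qed.

Lemma stays_nonneg_nseqU h m q :
  stays_nonneg h (nseq m U ++ q) = stays_nonneg (h + m) q.
Proof. by elim: m h => [|m IH] h /=; rewrite ?addn0 // IH addnS. Qed.

Lemma stays_nonneg_phi_aux n prev k s : k <= prev -> path leq prev s ->
  stays_nonneg (prev - k) (phi_aux n prev s) = superdiagonal_from k s.
Proof.
elim: s prev k => [|x s IH] prev k /= le_k_prev.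
  by rewrite -[nseq _ _]cats0 stays_nonneg_nseqU.
case/andP=> le_prev_x path_s; rewrite stays_nonneg_nseqU /=.
have -> : prev - k + (x - prev) = x - k by lia.
rewrite subn_gt0; case: (ltnP k x) => //= lt_k_x.
by rewrite -subnS IH.
Qed.

Lemma stays_nonneg_Phi n pi :
  in_M n pi -> stays_nonneg 0 (Phi n pi) = superdiagonal pi.
Proof.
case/and3P=> _ sorted_pi _.
rewrite /Phi -(subnn 0) stays_nonneg_phi_aux ?path_leq0 //.
by rewrite superdiagonal_fromE.
Qed.

Theorem theorem2 (n : nat) : 1 <= n ->
  bij_between (in_Mstar n) (in_GDstar n) (Phi n) /\
  bij_between (in_Msstar n) (in_Dstar n) (Phi n).
Proof.
move=> n_gt0; have bij_M_GD := bij_Phi_M_GD n_gt0; split.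
  apply: (bij_between_restrict (P := no_consec) (Q := DUD_free) bij_M_GD) => //.
  by move=> pi _; exact: DUD_free_Phi.
apply: (bij_between_restrict (P := [pred pi | superdiagonal pi && no_consec pi])
          (Q := [pred p | stays_nonneg 0 p && DUD_free p]) bij_M_GD).
- by move=> pi M_pi /=; rewrite stays_nonneg_Phi // DUD_free_Phi.
- by [].
- by move=> p; rewrite /in_Dstar in_Dyck_stays_nonneg /= andbA.
Qed.
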